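(* Let $m\ge1$ be an integer and $p=1/2^m$. Let $f:\{0,1\}^n\to\mathbb{R}$ and $g=\mathrm{Red}(f):\{0,1\}^{mn}\to\mathbb{R}$ as defined below. For $S\subseteq\{1,\dots,mn\}$ let $S_i=S\cap\{(i-1)m+1,\dots,im\}$ for $i=1,\dots,n$, let $S'=\{i:|S_i|>0\}\subseteq\{1,\dots,n\}$ and $k=|S'|$. Then \[ \hat g(S)=\Big(-\sqrt{\tfrac{p}{1-p}}\Big)^k(-1)^{|S|}\hat f(S'), \] where $\hat g$ is w.r.t. the uniform measure on $\{0,1\}^{mn}$ and $\hat f$ is w.r.t. $\mu_p$.
   Context: For $0<p<1$, $\mu_p$ denotes the product measure on $\{0,1\}^n$ with $\mu_p(x)=p^{\sum_i x_i}(1-p)^{n-\sum_i x_i}$; $\mu_{1/2}$ is the uniform measure. Elements of $\{0,1\}^n$ are identified with subsets of $\{1,\dots,n\}$. For $S,T\subseteq\{1,\dots,n\}$, $u_S(T)=\big(-\sqrt{(1-p)/p}\big)^{|S\cap T|}\big(\sqrt{p/(1-p)}\big)^{|S\setminus T|}$ (for $p=1/2$, $u_S(T)=(-1)^{|S\cap T|}$); these form an orthonormal basis of $L^2(\mu_p)$ and $\hat f(S)=\mathbb{E}_{\mu_p}[fu_S]$ is the Fourier–Walsh coefficient, so $f=\sum_S\hat f(S)u_S$. Reduction for $p=t/2^m$ (here $t=1$): write $y\in\{0,1\}^{mn}$ as $(y^1,\dots,y^n)$, $y^i=(y^i_1,\dots,y^i_m)\in\{0,1\}^m$, where $y^i_j$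 is coordinate $(i-1)m+j$ of $y$. Let $\mathrm{Bin}(y^i)=\sum_{j=0}^{m-1}2^jy^i_{m-j}$, $h(y^i)=1$ if $\mathrm{Bin}(y^i)\ge 2^m-t$ and $0$ otherwise, and $\mathrm{Red}(f)=g$, $g(y)=f(h(y^1),\dots,h(y^n))$. *)

(* Points of {0,1}^n are subsets of 'I_n (0-based coordinates). *)
From mathcomp Require Import all_boot all_order all_algebra.
Set Implicit Arguments. Unset Strict Implicit. Unset Printing Implicit Defensive.
Import Order.TTheory GRing.Theory Num.Theory.
Local Open Scope ring_scope.

Section Defs.
Variable R : rcfType.

Definition mu_p (p : R) (n : nat) (x : {set 'I_n}) : R :=
  p ^+ #|x| * (1 - p) ^+ (n - #|x|).

Definition u_p (p : R) (n : nat) (S T : {set 'I_n}) : R :=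
  (- Num.sqrt ((1 - p) / p)) ^+ #|S :&: T| * (Num.sqrt (p / (1 - p))) ^+ #|S :\: T|.

Definition fourier (p : R) (n : nat) (f : {set 'I_n} -> R) (S : {set 'I_n}) : R :=
  \sum_(T : {set 'I_n}) mu_p p T * f T * u_p p S T.

(* bit of y at 0-based coordinate k (1-based coordinate k+1) *)
Definition ybit (m n : nat) (y : {set 'I_(m * n)}) (k : nat) : bool :=
  [exists x : 'I_(m * n), (val x == k) && (x \in y)].

(* Bin(y^i) = sum_{j=0}^{m-1} 2^j y^i_{m-j}, block i (0-based); y^i_{j'} (1-based j')
   is 0-based coordinate i*m + (j'-1). *)
Definition Bin (m n : nat) (y : {set 'I_(m * n)}) (i : nat) : nat :=
  \sum_(j < m) 2 ^ j * ybit y (i * m + (m - j).-1).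

(* h(y^i) = 1 iff Bin(y^i) >= 2^m - t, with t = 1 *)
Definition hbit (m n : nat) (y : {set 'I_(m * n)}) (i : nat) : bool :=
  (2 ^ m - 1 <= Bin y i)%N.

Definition Red (m n : nat) (f : {set 'I_n} -> R) (y : {set 'I_(m * n)}) : R :=
  f [set i : 'I_n | hbit y i].

(* S_i = S ∩ block i (0-based block index) *)
Definition Sblock (m n : nat) (S : {set 'I_(m * n)}) (i : 'I_n) : {set 'I_(m * n)} :=
  [set x in S | (val x %/ m == val i)%N].

Definition Sprime (m n : nat) (S : {set 'I_(m * n)}) : {set 'I_n} :=
  [set i : 'I_n | (0 < #|Sblock S i|)%N].

End Defs.
Arguments Red {R} m {n} f y.

From mathcomp Require Import all_boot all_order all_algebra.
From mathcomp Require Import zify ring lra.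
Set Implicit Arguments. Unset Strict Implicit. Unset Printing Implicit Defensive.
Import Order.TTheory GRing.Theory Num.Theory.
Local Open Scope ring_scope.

(* Cut {0,1}^(mn) into n blocks of m bits.  h is 1 on a block exactly when the
   block is full, an event of uniform probability 2^-m = p, so the character sum
   defining ^g(S) factorizes over the blocks.  Block i contributes
   p (-1)^|S_i| if i is in the set x of full blocks and, by
   sum_B (-1)^|A :&: B| = 2^m [A = set0], contributes [S_i = set0] - p (-1)^|S_i|
   otherwise; these are precisely the i-th factors of
   (-sqrt(p/(1-p)))^k (-1)^|S| mu_p(x) u_S'(x). *)

Section BlockCoordinates.
Variables m n : nat.
Hypothesis m_gt0 : (0 < m)%N.
Local Open Scope nat_scope.

Lemma coord_proof (i : 'I_n) (j : 'I_m) : i * m + j < m * n.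
Proof.
have : i.+1 * m <= n * m by rewrite leq_mul2r ltn_ord orbT.
have := ltn_ord j; nia.
Qed.

Definition coord i j : 'I_(m * n) := Ordinal (coord_proof i j).

Lemma blk_proof (x : 'I_(m * n)) : x %/ m < n.
Proof. by rewrite ltn_divLR // -[n * m]mulnC ltn_ord. Qed.

Definition blk (x : 'I_(m * n)) : 'I_n := Ordinal (blk_proof x).
Definition pos (x : 'I_(m * n)) : 'I_m := Ordinal (ltn_pmod x m_gt0).

Lemma coordK x : coord (blk x) (pos x) = x.
Proof. by apply: val_inj; rewrite /= -divn_eq. Qed.

Lemma blk_coord i j : blk (coord i j) = i.
Proof. by apply: val_inj; rewrite /= divnMDl // divn_small ?addn0. Qed.

Lemma pos_coord i j : pos (coord i j) = j.
Proof. by apply: val_inj; rewrite /= modnMDl modn_small. Qed.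

Definition block (T : {set 'I_(m * n)}) (i : 'I_n) : {set 'I_m} :=
  [set j | coord i j \in T].

Definition glue (F : {ffun 'I_n -> {set 'I_m}}) : {set 'I_(m * n)} :=
  [set x | pos x \in F (blk x)].

Lemma block_glue F i : block (glue F) i = F i.
Proof. by apply/setP => j; rewrite !inE blk_coord pos_coord. Qed.

Lemma glue_bij : bijective glue.
Proof.
exists (fun T => [ffun i => block T i]) => [F|T].
  by apply/ffunP => i; rewrite ffunE block_glue.
by apply/setP => x; rewrite !inE ffunE inE coordK.
Qed.

Lemma blockI A B i : block (A :&: B) i = block A i :&: block B i.
Proof. by apply/setP => j; rewrite !inE. Qed.

Lemma card_blocks (T : {set 'I_(m * n)}) : #|T| = \sum_i #|block T i|.
Proof.
have coord_bij : {on predT, bijective (fun ij : 'I_n * 'I_m => coord ij.1 ij.2)}.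
  apply: onW_bij; exists (fun x => (blk x, pos x)) => [[i j]|x] /=.
    by rewrite blk_coord pos_coord.
  by rewrite coordK.
transitivity (\sum_i \sum_j (if coord i j \in T then 1 else 0)).
  by rewrite pair_big -sum1_card big_mkcond (reindex _ coord_bij).
apply: eq_bigr => i _; rewrite -sum1_card [RHS]big_mkcond.
by apply: eq_bigr => j _; rewrite inE.
Qed.

Lemma Sprime_block (S : {set 'I_(m * n)}) i : (i \in Sprime S) = (block S i != set0).
Proof.
rewrite !inE -!card_gt0; apply/card_gt0P/card_gt0P => [[x]|[j]].
  rewrite !inE => /andP[xS /eqP blk_x].
  have -> : i = blk x by apply: val_inj.
  by exists (pos x); rewrite inE coordK.
rewrite inE => Sij; exists (coord i j); rewrite !inE Sij /=.
by rewrite divnMDl // divn_small ?addn0.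
Qed.

Lemma leq_pow2_bits k (b : 'I_k -> bool) :
  (2 ^ k - 1 <= \sum_(j < k) 2 ^ j * b j) = [forall j, b j].
Proof.
have split_bits : \sum_(j < k) 2 ^ j * b j + \sum_(j < k) 2 ^ j * ~~ b j = 2 ^ k - 1.
  rewrite -big_split subn1 predn_exp mul1n /=.
  by apply: eq_bigr => j _; case: (b j); rewrite ?muln1 ?muln0 ?addn0.
rewrite -split_bits -[X in _ <= X]addn0 leq_add2l leqn0 sum_nat_eq0.
by apply: eq_forallb => j; rewrite muln_eq0 expn_eq0 /=; case: (b j).
Qed.

Lemma hbit_block (T : {set 'I_(m * n)}) (i : 'I_n) : hbit T i = (block T i == setT).
Proof.
rewrite /hbit /Bin.
(* Bin reads the bits of a block from the last one, with weight 2^j on bit m-1-j. *)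
have ybit_rev (j : 'I_m) : ybit T (i * m + (m - j).-1) = (coord i (rev_ord j) \in T).
  apply/existsP/idP => [[x /andP[/eqP xE Tx]]|Tij].
    by have -> : coord i (rev_ord j) = x by apply: val_inj; rewrite /= xE subnS.
  by exists (coord i (rev_ord j)); rewrite Tij /= subnS eqxx.
under eq_bigr do rewrite ybit_rev.
rewrite leq_pow2_bits; apply/forallP/eqP => [full|full j].
  apply/setP => j; rewrite !inE; have := full (rev_ord j); by rewrite rev_ordK.
by have := in_setT (rev_ord j); rewrite -full inE.
Qed.

End BlockCoordinates.

Section SignSums.
Variables (R : numDomainType) (T : finType).

Lemma sum_sign_cardI (A : {set T}) :
  \sum_(B : {set T}) (-1 : R) ^+ #|A :&: B| = if A == set0 then (2 ^ #|T|)%:R else 0.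
Proof.
case: eqP => [->|/eqP/set0Pn[a Aa]].
  under eq_bigr do rewrite set0I cards0 expr0.
  by rewrite sumr_const -cardsT -card_powerset powersetT cardsT.
pose toggle (B : {set T}) := if a \in B then B :\ a else a |: B.
have toggleK : involutive toggle.
  move=> B; rewrite /toggle; case: (boolP (a \in B)) => Ba.
    by rewrite setD11 setD1K.
  by rewrite setU11 setU1K.
have sign_toggle B : (-1 : R) ^+ #|A :&: toggle B| = - (-1) ^+ #|A :&: B|.
  rewrite /toggle; case: ifPn => Ba.
    rewrite setIDA [in RHS](cardsD1 a) inE Aa Ba exprS mulN1r opprK.
    by congr (_ ^+ #|_|); apply/setP => x; rewrite !inE andbC.
  rewrite setIUr (setIidPr _) ?sub1set // cardsU1 inE (negbTE Ba) andbF.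
  by rewrite exprS mulN1r.
set s := \sum_B _.
have : s = - s.
  rewrite {1}/s (reindex_inj (inv_inj toggleK)) -sumrN.
  by apply: eq_bigr => B _; exact: sign_toggle.
by move/eqP; rewrite -addr_eq0 -mulr2n mulrn_eq0 => /eqP.
Qed.

Lemma sum_sign_cardI_neqT (A : {set T}) :
  \sum_(B : {set T} | B != setT) (-1 : R) ^+ #|A :&: B| =
    (if A == set0 then (2 ^ #|T|)%:R else 0) - (-1) ^+ #|A|.
Proof. by rewrite -sum_sign_cardI [in RHS](bigD1 setT) //= setIT addrAC subrr add0r. Qed.

End SignSums.

Section ProductMeasure.
Variables (R : rcfType) (n : nat).

Lemma fourier_half (g : {set 'I_n} -> R) (S : {set 'I_n}) :
  fourier 2^-1 g S = (2^-1) ^+ n * \sum_(T : {set 'I_n}) g T * (-1) ^+ #|S :&: T|.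
Proof.
have half_neq0 : (2^-1 : R) != 0 by rewrite invr_eq0 pnatr_eq0.
have one_sub_half : 1 - 2^-1 = 2^-1 :> R by field.
rewrite /fourier mulr_sumr; apply: eq_bigr => T _.
rewrite /mu_p /u_p one_sub_half divff // sqrtr1 expr1n mulr1 -exprD.
by rewrite subnKC ?mulrA // -[n in (_ <= n)%N]card_ord max_card.
Qed.

Lemma mu_p_prod (p : R) (x : {set 'I_n}) :
  mu_p p x = \prod_i (if i \in x then p else 1 - p).
Proof.
have cardCx : (n - #|x| = #|~: x|)%N by rewrite [RHS]cardsCs setCK card_ord.
rewrite /mu_p cardCx -!prodr_const [X in X * _]big_mkcond [X in _ * X]big_mkcond.
rewrite -big_split /=.
by apply: eq_bigr => i _; rewrite inE; case: (i \in x); rewrite ?mulr1 ?mul1r.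
Qed.

Lemma u_p_prod (p : R) (S x : {set 'I_n}) :
  u_p p S x = \prod_i (if i \in S then
    (if i \in x then - Num.sqrt ((1 - p) / p) else Num.sqrt (p / (1 - p))) else 1).
Proof.
rewrite /u_p -!prodr_const [X in X * _]big_mkcond [X in _ * X]big_mkcond.
rewrite -big_split /=.
apply: eq_bigr => i _; rewrite !inE.
by case: (i \in S); case: (i \in x); rewrite ?mulr1 ?mul1r.
Qed.

End ProductMeasure.

Section Odds.
Variables (R : rcfType) (p : R).
Hypotheses (p_gt0 : 0 < p) (p_lt1 : p < 1).

Lemma odds_ge0 : 0 <= p / (1 - p).
Proof. by apply: divr_ge0; [exact: ltW | rewrite subr_ge0; exact: ltW]. Qed.

Lemma sqrt_odds_mulV : Num.sqrt (p / (1 - p)) * Num.sqrt ((1 - p) / p) = 1.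
Proof.
rewrite -sqrtrM ?odds_ge0 // -[RHS]sqrtr1; congr Num.sqrt.
by field; apply/andP; split; apply/eqP; move: p_gt0 p_lt1; lra.
Qed.

Lemma sqrt_odds_sqr_mul : Num.sqrt (p / (1 - p)) ^+ 2 * (1 - p) = p.
Proof. by rewrite sqr_sqrtr ?odds_ge0 // divfK //; apply/eqP; move: p_lt1; lra. Qed.

End Odds.

Section BlockFactor.
Variables (R : rcfType) (T : finType) (p : R).
Hypotheses (T_gt0 : (0 < #|T|)%N) (pE : p = (2 ^+ #|T|)^-1).

Lemma half_pow_gt0 : 0 < p.
Proof. by rewrite pE invr_gt0 exprn_gt0. Qed.

Lemma half_pow_lt1 : p < 1.
Proof.
rewrite pE invf_lt1 ?exprn_gt0 //; apply: (@lt_le_trans _ _ 2); first by rewrite ltr1n.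
by rewrite -[X in X <= _]expr1 ler_eXn2l // ltr1n.
Qed.

(* The right-hand side is shaped as the factor of one coordinate in
   (-sqrt(p/(1-p)))^k (-1)^|S| mu_p(x) u_S'(x), with A nonempty iff the
   coordinate lies in S' and b true iff it lies in x. *)
Lemma block_sum_factor (A : {set T}) (b : bool) :
  \sum_(B : {set T} | (B == setT) == b) p * (-1) ^+ #|A :&: B| =
    (if A != set0 then - Num.sqrt (p / (1 - p)) else 1) * (-1) ^+ #|A| *
    (if b then p else 1 - p) *
    (if A != set0 then
       (if b then - Num.sqrt ((1 - p) / p) else Num.sqrt (p / (1 - p))) else 1).
Proof.
have p_gt0 := half_pow_gt0; have p_lt1 := half_pow_lt1.
have mulpV : p * (2 ^ #|T|)%:R = 1 by rewrite pE natrX mulVf // expf_neq0 // pnatr_eq0.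
case: b.
  rewrite (eq_bigl (pred1 setT)) => [|B]; last by rewrite eqb_id.
  rewrite big_pred1_eq setIT; case: (A =P set0) => [->|_]; rewrite ?cards0 /=.
    by rewrite !mulr1 mul1r.
  have qr := sqrt_odds_mulV p_gt0 p_lt1.
  set q := Num.sqrt _ in qr *; set r := Num.sqrt _ in qr *.
  by rewrite -[LHS]mul1r -qr; ring.
rewrite (eq_bigl (fun B => B != setT)) => [|B]; last by rewrite eqbF_neg.
rewrite -mulr_sumr sum_sign_cardI_neqT mulrBr; case: (A =P set0) => [->|_] /=.
  by rewrite mulpV cards0 !mulr1 mul1r.
have q2 := sqrt_odds_sqr_mul p_gt0 p_lt1; set q := Num.sqrt _ in q2 *.
rewrite mulr0 add0r -[in LHS]q2; ring.
Qed.

End BlockFactor.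

Section Reduction.
Variables (R : rcfType) (m n : nat).
Hypothesis m_gt0 : (0 < m)%N.
Variable S : {set 'I_(m * n)}.
Local Notation p := ((2 ^+ m)^-1 : R).

Lemma fourier_Red_families (f : {set 'I_n} -> R) :
  fourier 2^-1 (Red m f) S =
    \sum_(F : {ffun 'I_n -> {set 'I_m}})
      f [set i | F i == setT] * \prod_i (p * (-1) ^+ #|block m_gt0 S i :&: F i|).
Proof.
rewrite fourier_half mulr_sumr (reindex _ (onW_bij _ (@glue_bij m n m_gt0))).
apply: eq_bigr => F _; rewrite /Red big_split /= prodr_const card_ord.
have -> : [set i : 'I_n | hbit (glue m_gt0 F) i] = [set i : 'I_n | F i == setT].
  by apply/setP => i; rewrite !inE hbit_block block_glue.
rewrite (card_blocks m_gt0) expr_sum.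
under eq_bigr do rewrite blockI block_glue.
by rewrite !exprVn -exprM mulrCA.
Qed.

Lemma fourier_Red_blocks (f : {set 'I_n} -> R) :
  fourier 2^-1 (Red m f) S =
    \sum_(x : {set 'I_n}) f x *
      \prod_i \sum_(B : {set 'I_m} | (B == setT) == (i \in x))
        p * (-1) ^+ #|block m_gt0 S i :&: B|.
Proof.
rewrite fourier_Red_families.
rewrite (partition_big (fun F : {ffun 'I_n -> {set 'I_m}} => [set i | F i == setT]) predT) //=.
apply: eq_bigr => x _; rewrite bigA_distr_big_dep mulr_sumr.
apply: eq_big => [F|F /eqP -> //].
apply/eqP/familyP => [<- i|full_x]; first by rewrite unfold_in inE.
by apply/setP => i; have := full_x i; rewrite unfold_in inE => /eqP.
Qed.

Lemma prod_block_sums (x : {set 'I_n}) :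
  \prod_i \sum_(B : {set 'I_m} | (B == setT) == (i \in x))
      p * (-1) ^+ #|block m_gt0 S i :&: B| =
    (- Num.sqrt (p / (1 - p))) ^+ #|Sprime S| * (-1) ^+ #|S| *
      mu_p p x * u_p p (Sprime S) x.
Proof.
have card_m : (0 < #|'I_m|)%N by rewrite card_ord.
have pE : p = (2 ^+ #|'I_m|)^-1 by rewrite card_ord.
under eq_bigr do rewrite (block_sum_factor card_m pE) -Sprime_block.
rewrite mu_p_prod u_p_prod (card_blocks m_gt0 S) expr_sum.
by rewrite -prodr_const [in RHS]big_mkcond -!big_split.
Qed.

End Reduction.

Theorem proposition2p1 (R : rcfType) (m n : nat) (hm : (1 <= m)%N)
    (f : {set 'I_n} -> R) (S : {set 'I_(m * n)}) :
  let p : R := (2 ^+ m)^-1 in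
  let k := #|Sprime S| in
  fourier (2^-1) (Red m f) S =
    (- Num.sqrt (p / (1 - p))) ^+ k * (-1) ^+ #|S| * fourier p f (Sprime S).
Proof.
move=> p k; rewrite (fourier_Red_blocks hm) /fourier mulr_sumr.
by apply: eq_bigr => x _; rewrite prod_block_sums; ring.
Qed.
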